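(* Let $\beta$ be a constant, $K$ a smooth positive function with antiderivative $J(u)=\int K(u)\,du$ assumed invertible, and $C(u)=\beta K(u)$. For arbitrary constants $C_0,C_1$, the functions $$u(z,t)=J^{-1}\!\left(\frac{C_0}{z\sqrt{t}}\exp\!\left(-\frac{\beta z^2}{4t}\right)\right)\qquad\text{and}\qquad u(z,t)=J^{-1}\!\left(\frac{C_1}{z}\right)$$ are solutions (for $z>0$, $t>0$, wherever the arguments lie in the range of $J$) of the equation $C(u)u_t=z^{-2}\left(K(u)z^{2}u_z\right)_z$. *)

From Stdlib Require Import Reals.
From Coquelicot Require Import Coquelicot.
Open Scope R_scope.

Definition smooth_fun (K : R -> R) : Prop := forall (n : nat) (x : R), ex_derive_n K n x.

Definition J_antideriv_of (J K : R -> R) : Prop := forall u : R, is_derive J u (K u).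

Definition solves_eq_at (beta : R) (K : R -> R) (u : R -> R -> R) (z t : R) : Prop :=
  ex_derive (fun s => u z s) t /\
  ex_derive (fun x => u x t) z /\
  ex_derive (fun y => K (u y t) * y ^ 2 * Derive (fun x => u x t) y) z /\
  beta * K (u z t) * Derive (fun s => u z s) t
  = / z ^ 2 * Derive (fun y => K (u y t) * y ^ 2 * Derive (fun x => u x t) y) z.

Definition in_range_of (J : R -> R) (y : R) : Prop := exists v : R, J v = y.

(* Kirchhoff transformation: since J' = K, the substitution w = J(u) turns
   K(u) u_t and K(u) u_z into w_t and w_z, so u = J^-1(w) solves
   C(u) u_t = z^-2 (K(u) z^2 u_z)_z exactly where w solves the linear equation
   beta w_t = z^-2 (z^2 w_z)_z, the radial heat equation in three dimensions.
   Writing w = v / z reduces it to the one-dimensional heat equation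
   beta v_t = v_zz, whose source solution C0 t^-1/2 exp (-beta z^2 / 4t) and
   constant solution C1 give the two solutions.  The only fact needed about
   J^-1 is the inverse function rule (J^-1)'(J v) = 1 / K v, valid as K > 0. *)

From Stdlib Require Import Reals Lra Ranalysis5.
From Coquelicot Require Import Coquelicot.
Open Scope R_scope.

(* Unlike [solves_eq_at], differentiability in z is required on a whole
   neighbourhood: [Derive] is total, so the flux clause alone says nothing
   about w near z. *)
Definition solves_radial_heat_at (beta : R) (w : R -> R -> R) (z t : R) : Prop :=
  ex_derive (fun s => w z s) t /\
  locally z (fun y => ex_derive (fun x => w x t) y) /\
  ex_derive (fun y => y ^ 2 * Derive (fun x => w x t) y) z /\
  beta * Derive (fun s => w z s) t
  = / z ^ 2 * Derive (fun y => y ^ 2 * Derive (fun x => w x t) y) z.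

Section KirchhoffTransform.

Variables K J Jinv : R -> R.
Hypothesis K_pos : forall x, 0 < K x.
Hypothesis J_K : J_antideriv_of J K.
Hypothesis JinvK : forall v, Jinv (J v) = v.

Lemma J_increasing x y : x < y -> J x < J y.
Proof.
intros Hxy; apply (incr_function J m_infty p_infty K); simpl; auto.
intros; apply K_pos.
Qed.

Lemma J_continuous : continuity J.
Proof.
intros x; apply continuity_pt_filterlim, (ex_derive_continuous (V := R_NormedModule)).
exists (K x); apply J_K.
Qed.

Lemma Jinv_between a b y :
  a < b -> J a <= y <= J b -> a <= Jinv y <= b /\ J (Jinv y) = y.
Proof.
intros Hab Hy.
pose proof (J_increasing a b Hab) as HJab.
destruct (IVT_gen J a b y J_continuous) as [x [Hx <-]].
{ rewrite Rmin_left, Rmax_right; lra. }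
rewrite Rmin_left, Rmax_right in Hx by lra.
now rewrite JinvK.
Qed.

Lemma is_derive_Jinv v : is_derive Jinv (J v) (/ K v).
Proof.
set (a := v - 1); set (b := v + 1).
assert (Hab : a < b) by (unfold a, b; lra).
assert (Hv : J a < J v < J b) by (split; apply J_increasing; unfold a, b; lra).
assert (J_der : forall x, Jinv (J a) <= x <= Jinv (J b) -> derivable_pt J x).
{ intros x _; exists (K x); apply is_derive_Reals, J_K. }
assert (Jinv_cont : continuity_pt Jinv (J v)).
{ apply (continuity_pt_recip_interv J Jinv a b); auto.
  - intros x y _ Hxy _; now apply J_increasing.
  - intros y H1 H2; apply (Jinv_between a b); auto.
  - intros y H1 H2; apply (Jinv_between a b); auto.
  - intros; apply J_continuous. }
assert (Hv' : Jinv (J a) <= Jinv (J v) <= Jinv (J b)) by (rewrite !JinvK; unfold a, b; lra).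
pose proof (derivable_pt_lim_recip_interv J Jinv (J a) (J b) (J v) J_der Jinv_cont
  (Rlt_trans _ _ _ (proj1 Hv) (proj2 Hv)) Hv Hv') as D.
rewrite (derive_pt_eq_0 _ _ (K v) _) in D.
- apply is_derive_Reals; rewrite <- Rmult_1_l; apply D.
  + intros y Hy; apply (Jinv_between a b); auto.
  + apply Rgt_not_eq, K_pos.
- rewrite JinvK; apply is_derive_Reals, J_K.
Qed.

Lemma is_derive_Jinv_comp (f : R -> R) x l :
  is_derive f x l -> in_range_of J (f x) ->
  is_derive (fun y => Jinv (f y)) x (l / K (Jinv (f x))).
Proof.
intros Hf [v Hv].
rewrite <- Hv, JinvK.
apply (is_derive_comp Jinv f x (/ K v) l); [rewrite <- Hv; apply is_derive_Jinv | exact Hf].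
Qed.

Lemma in_range_of_locally (f : R -> R) x :
  continuous f x -> in_range_of J (f x) -> locally x (fun y => in_range_of J (f y)).
Proof.
intros Hf [v Hv].
assert (Hlt : J (v - 1) < f x < J (v + 1)) by (rewrite <- Hv; split; apply J_increasing; lra).
apply (Hf (fun r => in_range_of J r)).
apply (locally_interval _ _ (J (v - 1)) (J (v + 1))); try apply Hlt.
intros r H1 H2; exists (Jinv r).
apply (Jinv_between (v - 1) (v + 1)); simpl in *; lra.
Qed.

Lemma solves_eq_at_Jinv_comp beta (w : R -> R -> R) z t :
  solves_radial_heat_at beta w z t -> in_range_of J (w z t) ->
  solves_eq_at beta K (fun z t => Jinv (w z t)) z t.
Proof.
intros [[wt Hwt] [Hwz [[d Hd] Heq]]] Hr.
rewrite (is_derive_unique (fun s : R => w z s) t wt Hwt) in Heq.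
rewrite (is_derive_unique (fun y : R => y ^ 2 * Derive (fun x => w x t) y) z d Hd) in Heq.
set (wz := Derive (fun x => w x t)) in *.
assert (Hloc : locally z (fun y =>
  is_derive (fun x => w x t) y (wz y) /\ in_range_of J (w y t))).
{ apply filter_and.
  - apply (filter_imp _ _ (fun y => @Derive_correct (fun x => w x t) y)), Hwz.
  - apply (in_range_of_locally (fun x => w x t)); auto.
    apply (ex_derive_continuous (V := R_NormedModule)), (locally_singleton _ _ Hwz). }
assert (Hflux : locally z (fun y =>
  y ^ 2 * wz y = K (Jinv (w y t)) * y ^ 2 * Derive (fun x => Jinv (w x t)) y)).
{ refine (filter_imp _ _ _ Hloc); intros y [Hy Hry].
  rewrite (is_derive_unique (fun x : R => Jinv (w x t)) y _ (is_derive_Jinv_comp _ _ _ Hy Hry)).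
  field; apply Rgt_not_eq, K_pos. }
pose proof (is_derive_Jinv_comp (fun s => w z s) t wt Hwt Hr) as Hut.
pose proof (is_derive_ext_loc _ _ z d Hflux Hd) as Hflux_d.
destruct (locally_singleton _ _ Hloc) as [Hwz0 _].
split; [eexists; exact Hut |].
split; [eexists; exact (is_derive_Jinv_comp _ _ _ Hwz0 Hr) |].
split; [eexists; exact Hflux_d |].
rewrite (is_derive_unique (fun s : R => Jinv (w z s)) t _ Hut).
rewrite (is_derive_unique (fun y : R => K (Jinv (w y t)) * y ^ 2 * Derive (fun x => Jinv (w x t)) y)
  z d Hflux_d), <- Heq.
field; apply Rgt_not_eq, K_pos.
Qed.

End KirchhoffTransform.

Lemma solves_radial_heat_at_intro beta (w : R -> R -> R) z t wt (wz : R -> R) d :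
  is_derive (fun s => w z s) t wt ->
  locally z (fun y => is_derive (fun x => w x t) y (wz y)) ->
  is_derive (fun y => y ^ 2 * wz y) z d ->
  beta * wt = / z ^ 2 * d ->
  solves_radial_heat_at beta w z t.
Proof.
intros Hwt Hwz Hd Heq.
assert (Hflux : locally z (fun y => y ^ 2 * wz y = y ^ 2 * Derive (fun x => w x t) y)).
{ refine (filter_imp _ _ _ Hwz); intros y Hy.
  now rewrite (is_derive_unique (fun x : R => w x t) y _ Hy). }
pose proof (is_derive_ext_loc _ _ z d Hflux Hd) as Hflux_d.
split; [eexists; exact Hwt |].
split; [refine (filter_imp _ _ _ Hwz); intros y Hy; eexists; exact Hy |].
split; [eexists; exact Hflux_d |].
rewrite (is_derive_unique (fun s : R => w z s) t wt Hwt).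
now rewrite (is_derive_unique (fun y : R => y ^ 2 * Derive (fun x => w x t) y) z d Hflux_d).
Qed.

Lemma source_solves_radial_heat beta C0 z t : 0 < z -> 0 < t ->
  solves_radial_heat_at beta
    (fun z t => C0 / (z * sqrt t) * exp (- (beta * z ^ 2) / (4 * t))) z t.
Proof.
intros Hz Ht.
pose proof (sqrt_lt_R0 t Ht) as Hs.
pose proof (sqrt_sqrt t (Rlt_le _ _ Ht)) as Hss.
apply (solves_radial_heat_at_intro _ _ z t
  (C0 * exp (- (beta * z ^ 2) / (4 * t)) / (z * sqrt t) * (- / (2 * t) + beta * z ^ 2 / (4 * t ^ 2)))
  (fun y => - C0 * exp (- (beta * y ^ 2) / (4 * t)) / sqrt t * (/ y ^ 2 + beta / (2 * t)))
  (- C0 * exp (- (beta * z ^ 2) / (4 * t)) / sqrt t * (beta * z / (2 * t) - beta ^ 2 * z ^ 3 / (4 * t ^ 2)))).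
- auto_derive; [repeat split; nra |].
  cbn [pow]; unfold Rdiv; set (E := exp _).
  remember (sqrt t) as s; rewrite <- Hss; field; repeat split; lra.
- apply (locally_interval _ z 0 p_infty); [exact Hz | exact I |].
  intros y Hy _; simpl in Hy; auto_derive; [nra |].
  cbn [pow]; unfold Rdiv; set (E := exp _); field; repeat split; lra.
- auto_derive; [nra |].
  cbn [pow]; unfold Rdiv; set (E := exp _); field; repeat split; lra.
- cbn [pow]; unfold Rdiv; set (E := exp _); field; repeat split; lra.
Qed.

Lemma inverse_solves_radial_heat beta C1 z t : 0 < z ->
  solves_radial_heat_at beta (fun z _ => C1 / z) z t.
Proof.
intros Hz.
apply (solves_radial_heat_at_intro _ _ z t 0 (fun y => - C1 / y ^ 2) 0).
- apply (is_derive_const (K := R_AbsRing) (V := R_NormedModule)).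
- apply (locally_interval _ z 0 p_infty); [exact Hz | exact I |].
  intros y Hy _; simpl in Hy; auto_derive; [lra |].
  field; lra.
- auto_derive; [nra |].
  field; lra.
- ring.
Qed.

Theorem mainTheorem11 (beta : R) (K J Jinv : R -> R)
  (HKs : smooth_fun K) (HKpos : forall x, 0 < K x)
  (HJ : J_antideriv_of J K) (HJinv : forall v, Jinv (J v) = v)
  (C0 C1 : R) :
  (forall z t, 0 < z -> 0 < t ->
     in_range_of J (C0 / (z * sqrt t) * exp (- (beta * z ^ 2) / (4 * t))) ->
     solves_eq_at beta K
       (fun z' t' => Jinv (C0 / (z' * sqrt t') * exp (- (beta * z' ^ 2) / (4 * t')))) z t)
  /\
  (forall z t, 0 < z -> 0 < t ->
     in_range_of J (C1 / z) ->
     solves_eq_at beta K (fun z' t' => Jinv (C1 / z')) z t).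
Proof.
split; intros z t Hz Ht Hr.
- apply (solves_eq_at_Jinv_comp K J Jinv HKpos HJ HJinv); [| exact Hr].
  now apply source_solves_radial_heat.
- apply (solves_eq_at_Jinv_comp K J Jinv HKpos HJ HJinv); [| exact Hr].
  now apply inverse_solves_radial_heat.
Qed.
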